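(* Let ${\bm X},{\bm Y}$ be finite sets with $n=|{\bm X}|$, $m=|{\bm Y}|$, let $m^{\bm X}_\bullet,m^{\bm Y}_\bullet$ be Markov transition kernels on them, $C\in\mathbb{R}_+^{n\times m}$ a cost matrix, $\delta\in(0,1]$ and $\epsilon\ge0$. Define $C^{\epsilon,\delta,(0)}=C$ and $C^{\epsilon,\delta,(l)}_{ij}=\delta C_{ij}+(1-\delta)d^\epsilon_{\mathrm W}(m^{\bm X}_i,m^{\bm Y}_j;C^{\epsilon,\delta,(l-1)})$ for $l\ge1$. Then $C^{\epsilon,\delta,(k)}$ converges as $k\to\infty$ to the unique fixed point $C^{\epsilon,\delta,(\infty)}$ of the map $D\mapsto\big(\delta C_{ij}+(1-\delta)d^\epsilon_{\mathrm W}(m^{\bm X}_i,m^{\bm Y}_j;D)\big)_{i,j}$, and for all $k$, $$\|C^{\epsilon,\delta,(k)}-C^{\epsilon,\delta,(\infty)}\|_\infty\le\frac{(1-\delta)^k}{\delta}\big(2\|C\|_\infty+\epsilon\log(nm)\big).$$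
   Context: For $\alpha\in\mathcal{P}({\bm X}),\beta\in\mathcal{P}({\bm Y})$, cost $D$ and $\epsilon\ge0$, $d^{\epsilon}_{\mathrm W}(\alpha,\beta;D)=\min_{P\in\mathcal{C}(\alpha,\beta)}\sum_{i,j}P_{ij}D_{ij}+\epsilon\sum_{i,j}P_{ij}\log P_{ij}$, with $\mathcal{C}(\alpha,\beta)$ the set of couplings. $\|\cdot\|_\infty$ is the entrywise max norm. *)

From HB Require Import structures.
From mathcomp Require Import all_boot all_order all_algebra.
From mathcomp Require Import all_classical all_reals all_analysis.
Set Implicit Arguments. Unset Strict Implicit. Unset Printing Implicit Defensive.
Import Order.TTheory GRing.Theory Num.Theory.
Local Open Scope classical_set_scope.
Local Open Scope ring_scope.

Section Defs.
Variable R : realType.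

Definition xlogx (x : R) : R := if x == 0 then 0 else x * ln x.

Definition is_prob (n : nat) (a : 'I_n -> R) : Prop :=
  (forall i, 0 <= a i) /\ \sum_i a i = 1.

Definition markov_kernel (n : nat) (M : 'M[R]_n) : Prop :=
  forall i, is_prob (fun k => M i k).

Definition coupling (n m : nat) (a : 'I_n -> R) (b : 'I_m -> R)
  (P : 'M[R]_(n, m)) : Prop :=
  [/\ forall i j, 0 <= P i j,
      forall i, \sum_j P i j = a i &
      forall j, \sum_i P i j = b j].

Definition dW (n m : nat) (eps : R) (a : 'I_n -> R) (b : 'I_m -> R)
  (D : 'M[R]_(n, m)) : R :=
  inf [set (\sum_i \sum_j (P i j * D i j + eps * xlogx (P i j)))
       | P in [set P | coupling a b P]].

Definition wl_map (n m : nat) (mX : 'M[R]_n) (mY : 'M[R]_m)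
  (C : 'M[R]_(n, m)) (delta eps : R) (D : 'M[R]_(n, m)) : 'M[R]_(n, m) :=
  \matrix_(i, j) (delta * C i j + (1 - delta) *
     dW eps (fun k => mX i k) (fun l => mY j l) D).

Definition wl_iter (n m : nat) (mX : 'M[R]_n) (mY : 'M[R]_m)
  (C : 'M[R]_(n, m)) (delta eps : R) (k : nat) : 'M[R]_(n, m) :=
  iter k (wl_map mX mY C delta eps) C.

Definition maxnorm (n m : nat) (A : 'M[R]_(n, m)) : R :=
  \big[Num.max/0]_(i < n) \big[Num.max/0]_(j < m) `|A i j|.

End Defs.

From HB Require Import structures.
From mathcomp Require Import all_boot all_order all_algebra.
From mathcomp Require Import all_classical all_reals all_analysis.
From mathcomp Require Import ring lra.
Import Order.TTheory GRing.Theory Num.Theory numFieldNormedType.Exports.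
Local Open Scope classical_set_scope.
Local Open Scope ring_scope.
Set Implicit Arguments. Unset Strict Implicit. Unset Printing Implicit Defensive.

(** The map [D |-> (delta C_ij + (1 - delta) d_W^eps(mX_i, mY_j; D))_ij] is a
    [(1 - delta)]-contraction for the max norm: [d_W^eps(a, b; .)] is an infimum
    over couplings [P] of the maps [D |-> \sum P D + eps \sum P log P], each
    1-Lipschitz because [P] has total mass one.  Banach's fixed point theorem
    gives the fixed point, the convergence and the a priori estimate
    [|C^(k) - C^(oo)| <= (1 - delta)^k / delta * |C^(1) - C|].  Finally
    [\sum P log P] lies in [[-log (n m), 0]] for a coupling [P], and the product
    coupling is admissible, so [-|D| - eps log (n m) <= d_W^eps(a, b; D) <= |D|],
    whence [|C^(1) - C| <= 2 |C| + eps log (n m)]. *)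

(* The library provides the complete and the normed-module structures on
   matrices but not their join, which Banach's theorem needs. *)
HB.instance Definition _ (R : realType) (n m : nat) := Complete.on 'M[R]_(n, m).

Section ContractionRate.
Context {R : realType} {X : completeNormedModType R}.
Variables (f : X -> X) (q : {nonneg R}).
Hypothesis ctrf : contraction q (totalfun f).
Variable x0 : X.

Lemma contraction_iter_lim_dist k :
  `|iter k f x0 - limn (fun k => iter k f x0)|
    <= `|f x0 - x0| / (1 - q%:num) * q%:num ^+ k.
Proof.
have := contraction_cvg ctrf (I : setT x0); rewrite -(cvg_shiftn k) => cvg_tail.
apply: (closed_cvg _ (@closed_closed_ball_ _ _ (iter k f x0) _) _ _ cvg_tail).
by apply: nearW => p /=; rewrite addnC; exact: (contraction_dist ctrf).
Qed.

Lemma contraction_lim_fixed :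
  f (limn (fun k => iter k f x0)) = limn (fun k => iter k f x0).
Proof. exact/esym/(contraction_cvg_fixed ctrf _ closedT). Qed.

End ContractionRate.

Section MatrixNorm.
Variables (R : realType) (n m : nat).
Implicit Types A : 'M[R]_(n, m).

Lemma ler_mx_entry_norm A i j : `|A i j| <= `|A|.
Proof.
rewrite [`|A|]mx_normrE.
exact: (le_bigmax _ (fun ij : 'I_n * 'I_m => `|A ij.1 ij.2|) (i, j)).
Qed.

Lemma mx_norm_le A b : 0 <= b -> (forall i j, `|A i j| <= b) -> `|A| <= b.
Proof.
by move=> b_ge0 Ab; rewrite [`|A|]mx_normrE; apply: bigmax_le => // -[i j] _.
Qed.

Lemma maxnormE A : maxnorm A = `|A|.
Proof.
apply/le_anti/andP; split.
  by apply: bigmax_le => // i _; apply: bigmax_le => // j _; exact: ler_mx_entry_norm.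
apply: mx_norm_le => [|i j]; first exact: bigmax_ge_id.
apply: le_trans (le_bigmax _ _ i).
exact: (le_bigmax _ (fun j => `|A i j|) j).
Qed.

End MatrixNorm.

Section Entropy.
Variable R : realType.

(* The tangent of [xlogx] at [N^-1]. *)
Lemma xlogx_ge_tangent (N p : R) : 0 < N -> 0 <= p ->
  p - N^-1 - p * ln N <= xlogx p.
Proof.
move=> N_gt0 p_ge0; rewrite /xlogx; have [->|p_neq0] := eqVneq p 0.
  by rewrite mul0r subr0 sub0r oppr_le0 invr_ge0 ltW.
have p_gt0 : 0 < p by rewrite lt_neqAle eq_sym p_neq0.
have Np_gt0 : 0 < N * p by rewrite mulr_gt0.
have := expR_ge1Dx (- ln (N * p)).
rewrite expRN lnK ?posrE // lnM ?posrE // => exp_ge.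
have : p * (1 - (N * p)^-1) <= p * (ln N + ln p).
  by apply: ler_wpM2l; [exact: ltW | move: exp_ge; rewrite opprD; lra].
rewrite invfM mulrBr mulr1 mulrDr mulrCA mulfV ?gt_eqF // mulr1.
lra.
Qed.

Lemma xlogx_le0 (p : R) : 0 <= p -> p <= 1 -> xlogx p <= 0.
Proof.
by move=> p_ge0 p_le1; rewrite /xlogx; case: eqP => // _; rewrite mulr_ge0_le0 // ln_le0.
Qed.

Lemma ln_natr_ge0 (k : nat) : 0 <= ln (k%:R : R).
Proof. by case: k => [|k]; [rewrite ln0 | apply: ln_ge0; rewrite ler1n]. Qed.

Lemma sum_xlogx_ge (T : finType) (P : T -> R) :
  (forall t, 0 <= P t) -> \sum_t P t = 1 -> - ln #|T|%:R <= \sum_t xlogx (P t).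
Proof.
move=> P_ge0 P_sum1; set N : R := #|T|%:R.
have N_gt0 : 0 < N.
  rewrite ltr0n lt0n; apply/eqP => /card0_eq T0; move: P_sum1.
  rewrite big_pred0 => [/eqP|t]; first by rewrite eq_sym oner_eq0.
  by move: (T0 t); rewrite !inE.
apply: le_trans (ler_sum _ (fun t _ => xlogx_ge_tangent N_gt0 (P_ge0 t))).
rewrite !sumrB -mulr_suml P_sum1 sumr_const -mulr_natr mulVf ?gt_eqF //.
lra.
Qed.

End Entropy.

Definition ot_cost (R : realType) n m (eps : R) (D P : 'M[R]_(n, m)) : R :=
  \sum_i \sum_j (P i j * D i j + eps * xlogx (P i j)).

Definition product_coupling (R : realType) n m (a : 'I_n -> R) (b : 'I_m -> R) :
  'M[R]_(n, m) := \matrix_(i, j) (a i * b j).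

Lemma prob_le1 (R : realType) n (a : 'I_n -> R) i : is_prob a -> a i <= 1.
Proof. by case=> a_ge0 <-; rewrite (bigD1 i) //= lerDl sumr_ge0. Qed.

Section EntropicTransport.
Variables (R : realType) (n m : nat) (a : 'I_n -> R) (b : 'I_m -> R) (eps : R).
Hypotheses (pa : is_prob a) (pb : is_prob b) (eps_ge0 : 0 <= eps).
Implicit Types D P : 'M[R]_(n, m).

Lemma coupling_mass P : coupling a b P -> \sum_i \sum_j P i j = 1.
Proof. by case: pa => _ <- [_ P_row _]; apply: eq_bigr => i _; exact: P_row. Qed.

Lemma coupling_entropy_ge P : coupling a b P ->
  - ln (n * m)%:R <= \sum_i \sum_j xlogx (P i j).
Proof.
move=> cP; have [P_ge0 _ _] := cP.
have -> : (n * m)%N = #|{: 'I_n * 'I_m}| by rewrite card_prod !card_ord.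
rewrite pair_bigA; apply: sum_xlogx_ge => [[i j]|]; first exact: P_ge0.
by rewrite -(pair_bigA _ (fun i j => P i j)) coupling_mass.
Qed.

Lemma ot_costE D P : ot_cost eps D P =
  \sum_i \sum_j P i j * D i j + eps * \sum_i \sum_j xlogx (P i j).
Proof.
rewrite /ot_cost mulr_sumr -big_split; apply: eq_bigr => i _.
by rewrite mulr_sumr -big_split.
Qed.

Lemma ot_cost_ge L D P : coupling a b P -> (forall i j, L <= D i j) ->
  L - eps * ln (n * m)%:R <= ot_cost eps D P.
Proof.
move=> cP L_le; have [P_ge0 _ _] := cP; rewrite ot_costE.
apply: lerD; last by rewrite -mulrN ler_wpM2l // coupling_entropy_ge.
rewrite -[L]mul1r -(coupling_mass cP) mulr_suml; apply: ler_sum => i _.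
by rewrite mulr_suml; apply: ler_sum => j _; rewrite ler_wpM2l ?P_ge0.
Qed.

Lemma ot_cost_shift_le e D D' P : coupling a b P ->
  (forall i j, D i j <= D' i j + e) -> ot_cost eps D P <= ot_cost eps D' P + e.
Proof.
move=> cP D_le; have [P_ge0 _ _] := cP; rewrite !ot_costE.
suff : \sum_i \sum_j P i j * D i j <= \sum_i \sum_j P i j * D' i j + e by lra.
rewrite -[e in leRHS]mul1r -(coupling_mass cP) mulr_suml -big_split.
apply: ler_sum => i _; rewrite mulr_suml -big_split; apply: ler_sum => j _.
by rewrite /= -mulrDr ler_wpM2l ?P_ge0.
Qed.

Lemma product_couplingP : coupling a b (product_coupling a b).
Proof.
case: pa pb => [a_ge0 a_sum1] [b_ge0 b_sum1]; split.
- by move=> i j; rewrite mxE mulr_ge0.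
- by move=> i; under eq_bigr do rewrite mxE; rewrite -mulr_sumr b_sum1 mulr1.
- by move=> j; under eq_bigr do rewrite mxE; rewrite -mulr_suml a_sum1 mul1r.
Qed.

Lemma ot_cost_product_le D : ot_cost eps D (product_coupling a b) <= `|D|.
Proof.
have [P_ge0 _ _] := product_couplingP.
apply: (@le_trans _ _ (\sum_i \sum_j product_coupling a b i j * `|D|)).
  apply: ler_sum => i _; apply: ler_sum => j _.
  have P_le1 : product_coupling a b i j <= 1.
    by rewrite mxE mulr_ile1 ?prob_le1 //; [case: pa | case: pb].
  have : eps * xlogx (product_coupling a b i j) <= 0.
    by rewrite mulr_ge0_le0 // xlogx_le0 ?P_ge0.
  have : product_coupling a b i j * D i j <= product_coupling a b i j * `|D|.
    by rewrite ler_wpM2l ?P_ge0 // (le_trans (ler_norm _) (ler_mx_entry_norm _ _ _)).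
  lra.
under eq_bigr do rewrite -mulr_suml.
by rewrite -mulr_suml (coupling_mass product_couplingP) mul1r.
Qed.

Let costs D := [set ot_cost eps D P | P in [set P | coupling a b P]].

Let costs_neq0 D : costs D !=set0.
Proof.
exists (ot_cost eps D (product_coupling a b)), (product_coupling a b) => //.
exact: product_couplingP.
Qed.

Let costs_lbound D : has_lbound (costs D).
Proof.
exists (- `|D| - eps * ln (n * m)%:R) => _ [P cP <-]; apply: ot_cost_ge cP _ => i j.
by apply: lerNnormlW; exact: ler_mx_entry_norm.
Qed.

Lemma dW_le_cost D P : coupling a b P -> dW eps a b D <= ot_cost eps D P.
Proof. by move=> cP; apply: (ge_inf (costs_lbound D)); exists P. Qed.

Lemma dW_ge L D : (forall i j, L <= D i j) ->
  L - eps * ln (n * m)%:R <= dW eps a b D.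
Proof.
by move=> L_le; apply: lb_le_inf (costs_neq0 D) _ => _ [P cP <-]; exact: ot_cost_ge.
Qed.

Lemma dW_le_norm D : dW eps a b D <= `|D|.
Proof. exact: le_trans (dW_le_cost D product_couplingP) (ot_cost_product_le D). Qed.

Lemma dW_shift_le e D D' : (forall i j, D i j <= D' i j + e) ->
  dW eps a b D <= dW eps a b D' + e.
Proof.
move=> D_le; rewrite -lerBlDr; apply: lb_le_inf (costs_neq0 D') _ => _ [P cP <-].
by rewrite lerBlDr (le_trans (dW_le_cost D cP) (ot_cost_shift_le cP D_le)).
Qed.

Lemma dW_lipschitz D D' : `|dW eps a b D - dW eps a b D'| <= `|D - D'|.
Proof.
have entry_le i j : `|D i j - D' i j| <= `|D - D'|.
  by have := ler_mx_entry_norm (D - D') i j; rewrite !mxE.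
have le_DD' : dW eps a b D <= dW eps a b D' + `|D - D'|.
  by apply: dW_shift_le => i j; move: (entry_le i j); rewrite ler_norml => /andP[]; lra.
have le_D'D : dW eps a b D' <= dW eps a b D + `|D - D'|.
  by apply: dW_shift_le => i j; move: (entry_le i j); rewrite ler_norml => /andP[]; lra.
by rewrite ler_norml; apply/andP; split; lra.
Qed.

Lemma dW_sub_entry_le D i j :
  `|dW eps a b D - D i j| <= 2 * `|D| + eps * ln (n * m)%:R.
Proof.
have lo : - `|D| - eps * ln (n * m)%:R <= dW eps a b D.
  by apply: dW_ge => k l; apply: lerNnormlW; exact: ler_mx_entry_norm.
have hi := dW_le_norm D.
have /andP[Dij_lo Dij_hi] : - `|D| <= D i j <= `|D|.
  by rewrite -ler_norml ler_mx_entry_norm.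
have ent_ge0 : 0 <= eps * ln (n * m)%:R by rewrite mulr_ge0 // ln_natr_ge0.
rewrite ler_norml; apply/andP; split; lra.
Qed.

End EntropicTransport.

Section WLMap.
Variables (R : realType) (n m : nat) (mX : 'M[R]_n) (mY : 'M[R]_m).
Variables (C : 'M[R]_(n, m)) (delta eps : R).
Hypotheses (pX : markov_kernel mX) (pY : markov_kernel mY).
Hypotheses (delta_ge0 : 0 <= delta) (delta_le1 : delta <= 1) (eps_ge0 : 0 <= eps).
Local Notation F := (wl_map mX mY C delta eps).

Lemma wl_map_lipschitz D D' : `|F D - F D'| <= (1 - delta) * `|D - D'|.
Proof.
apply: mx_norm_le => [|i j]; first by rewrite mulr_ge0 ?subr_ge0.
rewrite !mxE opprD addrACA subrr add0r -mulrBr normrM ger0_norm ?subr_ge0 //.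
by rewrite ler_wpM2l ?subr_ge0 // dW_lipschitz.
Qed.

Lemma wl_map_sub_le : `|F C - C| <= 2 * `|C| + eps * ln (n * m)%:R.
Proof.
apply: mx_norm_le => [|i j]; first by rewrite addr_ge0 ?mulr_ge0 ?ln_natr_ge0.
rewrite !mxE.
set w := dW _ _ _ _.
have -> : delta * C i j + (1 - delta) * w - C i j = (1 - delta) * (w - C i j) by ring.
rewrite normrM ger0_norm ?subr_ge0 //.
apply: le_trans (dW_sub_entry_le (pX i) (pY j) eps_ge0 C i j).
by rewrite ler_piMl // lerBlDr lerDl.
Qed.

End WLMap.

Theorem proposition37 (R : realType) (n m : nat)
  (mX : 'M[R]_n) (mY : 'M[R]_m) (C : 'M[R]_(n, m)) (delta eps : R) :
  markov_kernel mX -> markov_kernel mY ->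
  (forall i j, 0 <= C i j) ->
  0 < delta -> delta <= 1 -> 0 <= eps ->
  exists Cinf : 'M[R]_(n, m),
    [/\ wl_map mX mY C delta eps Cinf = Cinf,
        (forall D, wl_map mX mY C delta eps D = D -> D = Cinf),
        (forall i j, wl_iter mX mY C delta eps k i j @[k --> \oo] --> Cinf i j) &
        (forall k : nat,
           maxnorm (wl_iter mX mY C delta eps k - Cinf)
           <= (1 - delta) ^+ k / delta * (2 * maxnorm C + eps * ln ((n * m)%:R)))].
Proof.
move=> pX pY _ delta_gt0 delta_le1 eps_ge0.
set F := wl_map mX mY C delta eps.
have q_ge0 : 0 <= 1 - delta by rewrite subr_ge0.
have ctrF : contraction (NngNum q_ge0) (totalfun F).
  split=> [/=|[D D'] _]; first by rewrite ltrBlDr ltrDl.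
  exact: (wl_map_lipschitz C pX pY delta_le1 eps_ge0).
exists (limn (fun k => iter k F C)); split.
- exact: contraction_lim_fixed ctrF C.
- move=> D FD; apply: (contraction_fixpoint_unique (f := totalfun F)) => //.
    by exists (NngNum q_ge0).
  exact/esym/(contraction_lim_fixed ctrF C).
- move=> i j.
  exact: (cvg_comp _ _ (contraction_cvg ctrF (I : setT C))
                    (@coord_continuous _ _ _ i j _)).
- move=> k; rewrite !maxnormE.
  apply: le_trans (contraction_iter_lim_dist ctrF C k) _.
  rewrite /= subKr mulrAC [leRHS]mulrC mulrA.
  rewrite ler_wpM2r ?invr_ge0 ?(ltW delta_gt0) // ler_wpM2r ?exprn_ge0 //.
  exact: (wl_map_sub_le C pX pY (ltW delta_gt0) delta_le1 eps_ge0).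
Qed.
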